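(* Let $\mu=\min\{\kappa : 2^{\kappa}$ is not selectively sequentially separable$\}$. Then $\mu=\min\{\mathfrak{b},\mathfrak{q}\}$.
   Context: $2^\kappa$ denotes the Cantor cube $\{0,1\}^\kappa$ with the product topology. A space $Z$ is selectively sequentially separable if for every sequence $(D_n:n\in\mathbb{N})$ of sequentially dense subsets of $Z$ (sets such that every point of $Z$ is a limit of a sequence from the set) one can choose finite $F_n\subseteq D_n$ so that $\bigcup_n F_n$ is sequentially dense in $Z$. $\mathfrak{b}$ is the least cardinality of a subset of $\mathbb{N}^{\mathbb{N}}$ unbounded with respect to $\leq^*$ ($f\leq^* g$ iff $f(n)\leq g(n)$ for all but finitely many $n$). A $Q$-set is a subset of $\mathbb{R}$ each of whose subsets is a $G_\delta$ in it; $\mathfrak{q}$ is the smallest cardinal such that for every $\kappa<\mathfrak{q}$ there is a $Q$-set of size $\kappa$. *)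

From HB Require Import structures.
From mathcomp Require Import all_boot all_order all_algebra.
From mathcomp Require Import all_classical all_reals all_analysis.
From mathcomp Require Import Rstruct Rstruct_topology.
From Stdlib Require Import Reals.

Set Implicit Arguments. Unset Strict Implicit. Unset Printing Implicit Defensive.
Local Open Scope classical_set_scope.

Definition seq_dense (Z : topologicalType) (D : set Z) : Prop :=
  forall z : Z, exists s : nat -> Z, (forall n, D (s n)) /\ (s @ \oo --> z).

Definition sel_seq_separable (Z : topologicalType) : Prop :=
  forall Ds : nat -> set Z, (forall n, seq_dense (Ds n)) ->
    exists Fs : nat -> set Z,
      (forall n, finite_set (Fs n) /\ Fs n `<=` Ds n) /\
      seq_dense (\bigcup_n Fs n).

(* the Cantor cube 2^K: {0,1}^K with the product topology (bool is discrete) *)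
Definition cantor_cube (K : Type) : topologicalType := {ptws K -> bool}.

Definition card_leq (L K : Type) : Prop := exists f : L -> K, injective f.

Definition le_star (f g : nat -> nat) : Prop :=
  exists N, forall n, (N <= n)%N -> (f n <= g n)%N.

(* |K| < b : every family of at most |K| functions (indexed by K) is <=*-bounded *)
Definition lt_bnum (K : Type) : Prop :=
  forall F : K -> (nat -> nat), exists g : nat -> nat, forall k, le_star (F k) g.

Definition Gdelta_in (A B : set R) : Prop :=
  exists U : nat -> set R, (forall n, open (U n)) /\ B = A `&` \bigcap_n U n.

Definition Qset (A : set R) : Prop := forall B, B `<=` A -> Gdelta_in A B.

(* |K| < q : there is a Q-set of cardinality |K| *)
Definition lt_qnum (K : Type) : Prop :=
  exists f : K -> R, injective f /\ Qset (range f).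

From Stdlib Require Import Reals.
From mathcomp Require Import all_boot all_order all_algebra all_classical all_reals all_analysis.
From mathcomp Require Import Rstruct Rstruct_topology lra.

Set Implicit Arguments. Unset Strict Implicit. Unset Printing Implicit Defensive.
Import Order.TTheory GRing.Theory Num.Theory numFieldNormedType.Exports.
Local Open Scope classical_set_scope.

(* If |L| < b and f : L -> R is injective with a Q-set as image, then for z in
   2^L the sets f(z^-1(1)) and f(z^-1(0)) are relatively G_delta in f(L).
   Approximating their G_delta envelopes from inside by finite unions of
   rational intervals, with b bounding the intervals needed at stage n, gives a
   countable sequentially dense subset of 2^L; a diagonal argument, bounded again
   by b, then selects finitely many points from each sequentially dense D_n.
   Conversely, given F : K -> nat -> nat with unbounded columns, the points of
   2^K vanishing wherever F(a, n) is large form sequentially dense sets D_n, and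
   finite selections from them converging to the constant 1 yield a bound for F.
   A countable sequentially dense set {E t} separates the points of K, so the
   digits (E t a)_t embed K into R, and every subset of the image is the trace
   of a limsup of open sets, hence G_delta.  Both b and q are downward closed. *)

Lemma cantor_cube_coord_open (K : Type) (a : K) (b : bool) :
  open [set g : cantor_cube K | g a = b].
Proof.
rewrite openE => g /= gab.
have /cvg_sup /(_ a) : nbhs g --> (g : cantor_cube K) by [].
move=> /(_ [set h | h a = b]); apply.
rewrite nbhsE /=; exists [set h : cantor_cube K | h a = b] => //; split=> //.
by exists [set b] => //; exact: discrete_open.
Qed.

Lemma cvg_cantor_cubeP (K : Type) (s : nat -> cantor_cube K) (z : cantor_cube K) :
  s @ \oo --> z <-> forall a, \forall n \near \oo, s n a = z a.
Proof.
split=> [sz a | sz].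
  apply: (sz [set g | g a = z a]); apply: open_nbhs_nbhs; split=> //.
  exact: cantor_cube_coord_open.
apply/cvg_sup => a A; rewrite nbhsE /= => -[B [[C Co <-] Cz] BA].
by apply: filterS (sz a) => n /= sza; apply: BA; rewrite /preimage /= sza.
Qed.

Lemma cantor_cube_accessible (K : Type) : accessible_space (cantor_cube K).
Proof.
move=> x y /eqP xy.
have [a xya] : exists a, x a != y a.
  by apply: contrapT => /forallNP xy'; apply/xy/funext => a; apply/eqP/negPn/negP/xy'.
exists [set g | g a = x a]; rewrite !inE /=; split=> //; last exact/nesym/eqP.
exact: cantor_cube_coord_open.
Qed.

Lemma cantor_cube_finite_closed (K : Type) (A : set (cantor_cube K)) :
  finite_set A -> closed A.
Proof. exact: accessible_finite_set_closed.1 (@cantor_cube_accessible K) A. Qed.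

Definition seq_separable (Z : topologicalType) : Prop :=
  exists E : nat -> Z, forall z : Z, exists m : nat -> nat, E \o m @ \oo --> z.

Lemma seq_dense_setT (Z : topologicalType) : seq_dense (@setT Z).
Proof. by move=> z; exists (fun=> z); split=> //; exact: cvg_cst. Qed.

(* [z0] only pads the enumeration: an empty space is selectively sequentially
   separable but has no enumerated dense set. *)
Lemma sel_seq_separable_seq_separable (Z : topologicalType) (z0 : Z) :
  sel_seq_separable Z -> seq_separable Z.
Proof.
move=> sssZ.
have [Fs [Fsfin Fsdense]] := sssZ (fun=> setT) (fun=> @seq_dense_setT Z).
have /choice[l Fsl] : forall n, exists l : seq Z, Fs n = [set` l].
  by move=> n; apply/finite_seqP; exact: (Fsfin n).1.
exists (fun t => if unpickle t is Some (n, k) then nth z0 (l n) k else z0) => z.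
have [s [sFs sz]] := Fsdense z.
have /choice[ni sl] : forall i, exists n, s i \in l n.
  by move=> i; have [n _] := sFs i; rewrite Fsl; exists n.
exists (fun i => pickle (ni i, index (s i) (l (ni i)))).
apply: cvg_trans sz; apply: near_eq_cvg; apply: nearW => i /=.
by rewrite pickleK nth_index.
Qed.

Lemma lt_bnum_card_leq (L K : Type) : card_leq L K -> lt_bnum K -> lt_bnum L.
Proof.
move=> [h h_inj] bK F.
pose G k :=
  if pselect (exists l, h l = k) is left hl then F (projT1 (cid hl)) else fun=> 0.
have [g Gg] := bK G; exists g => l; have := Gg (h l); rewrite /G.
case: pselect => [hl|]; last by case; exists l.
by rewrite (h_inj _ _ (projT2 (cid hl))).
Qed.

Lemma lt_qnum_card_leq (L K : Type) : card_leq L K -> lt_qnum K -> lt_qnum L.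
Proof.
move=> [h h_inj] [f [f_inj Qf]].
exists (f \o h); split=> [x y /f_inj /h_inj //|B Bfh].
have [U [oU BU]] : Gdelta_in (range f) B.
  by apply: Qf => x /Bfh[l _ <-]; exists (h l).
exists U; split=> //; apply/seteqP; split=> [x Bx | _ [[l _ <-] Ul]].
  by move: (Bx); rewrite {1}BU => -[_ Ux]; split=> //; exact: Bfh.
by rewrite BU; split=> //; exists (h l).
Qed.

Section rational_intervals.
Local Open Scope ring_scope.

Definition rat_itv (j : nat) : set R :=
  if unpickle j is Some (q, r) then [set y | ratr q < y < ratr r] else set0.

Lemma rat_itv_base (U : set R) (x : R) :
  open U -> U x -> exists j, rat_itv j x /\ rat_itv j `<=` U.
Proof.
move=> oU Ux; have [e /= e0 xeU] := (nbhs_ballP x U).1 (oU x Ux).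
have [q] : exists q : rat, ratr q \in `]x - e, x[ by apply: rat_in_itvoo; lra.
have [r] : exists r : rat, ratr r \in `]x, x + e[ by apply: rat_in_itvoo; lra.
rewrite !in_itv /= => /andP[xr re] /andP[eq qx].
exists (pickle (q, r)); rewrite /rat_itv pickleK; split; first by rewrite /= qx xr.
move=> y /= /andP[qy yr]; apply: xeU; rewrite /ball /= ltr_distl; apply/andP; split; lra.
Qed.

End rational_intervals.

Definition rat_union (l : seq nat) : set R := [set x | exists2 j, j \in l & rat_itv j x].

Definition rat_cover (X : set R) (b : nat) : seq nat :=
  [seq j <- iota 0 b.+1 | `[< rat_itv j `<=` X >]].

Lemma rat_union_cover_sub (X : set R) (b : nat) : rat_union (rat_cover X b) `<=` X.
Proof. by move=> x [j]; rewrite mem_filter => /andP[/asboolP jX _] /jX. Qed.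

Lemma rat_union_cover (X : set R) (b j : nat) (x : R) :
  (j <= b)%N -> rat_itv j x -> rat_itv j `<=` X -> rat_union (rat_cover X b) x.
Proof.
move=> jb jx jX; exists j => //.
by rewrite mem_filter mem_iota add0n ltnS jb leq0n /= andbT; exact/asboolP.
Qed.

Lemma open_bigcap_II (T : topologicalType) (U : nat -> set T) (n : nat) :
  (forall i, open (U i)) -> open (\bigcap_(i in `I_n) U i).
Proof.
move=> oU; rewrite -[X in open X]setCK setC_bigcap; apply: closed_openC.
by apply: closed_bigcup => [|i _]; [exact: finite_II | exact: open_closedC].
Qed.

Lemma Qset_Gdelta_seq (A B : set R) : Qset A -> B `<=` A ->
  exists V : nat -> set R, [/\ forall n, open (V n), forall x n, B x -> V n x &
    forall x, A x -> ~ B x -> \forall n \near \oo, ~ V n x].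
Proof.
move=> QA BA; have [U [oU BAU]] := QA B BA.
exists (fun n => \bigcap_(i in `I_n.+1) U i); split.
- by move=> n; exact: open_bigcap_II.
- by move=> x n; rewrite BAU => -[_ Ux] i _; exact: Ux.
move=> x Ax nBx; have [N nUN] : exists N, ~ U N x.
  apply: contrapT => /forallNP nnU; apply: nBx; rewrite BAU.
  by split=> // i _; exact: contrapT (nnU i).
by exists N.+1 => // n /= Nn VNx; apply/nUN/VNx; rewrite /= ltnS ltnW.
Qed.

Lemma lt_bnum_lt_qnum_seq_separable (L : Type) :
  lt_bnum L -> lt_qnum L -> seq_separable (cantor_cube L).
Proof.
move=> bL [f [f_inj Qf]].
pose E (m : nat) : cantor_cube L :=
  if unpickle m is Some (l1, l2)
  then fun a => `[< rat_union l1 (f a) /\ ~ rat_union l2 (f a) >] else fun=> false.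
(* To approach z, V b is a G_delta envelope of f(z^-1(b)) and h picks rational
   intervals inside it; as g dominates h, the cover [rat_cover _ (g n)] of V b n
   eventually contains an interval around f a. *)
exists E => z.
have /choice[V Vz] : forall b : bool, exists V : nat -> set R,
    [/\ forall n, open (V n), forall x n, (f @` [set a | z a = b]) x -> V n x &
    forall x, range f x -> ~ (f @` [set a | z a = b]) x -> \forall n \near \oo, ~ V n x].
  by move=> b; apply: Qset_Gdelta_seq => // _ [a _ <-]; exists a.
have /choice[h hV] : forall an : L * nat,
    exists j, rat_itv j (f an.1) /\ rat_itv j `<=` V (z an.1) an.2.
  move=> [a n]; have [oV zV _] := Vz (z a).
  by apply: rat_itv_base => //; apply: zV; exists a.
have [g gh] := bL (fun a n => h (a, n)).
exists (fun n => pickle (rat_cover (V true n) (g n), rat_cover (V false n) (g n))).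
apply/cvg_cantor_cubeP => a.
have [Nz _ notV] : \forall n \near \oo, ~ V (~~ z a) n (f a).
  have [_ _] := Vz (~~ z a); apply; first by exists a.
  by move=> [b /= + /f_inj ba]; rewrite ba; case: (z a).
have [Nh hg] := gh a.
exists (maxn Nz Nh) => // n /=; rewrite geq_max => /andP[zn hn].
rewrite /E pickleK; have [hf hVz] := hV (a, n).
have := notV n zn; case: (z a) hVz => /= hVz notVn.
  apply/asboolP; split; last by move/rat_union_cover_sub.
  exact: rat_union_cover (hg n hn) hf hVz.
by apply/asboolPn => -[/rat_union_cover_sub].
Qed.

Lemma lt_bnum_sel_seq_separable (L : Type) :
  lt_bnum L -> seq_separable (cantor_cube L) -> sel_seq_separable (cantor_cube L).
Proof.
move=> bL [E Edense] Ds Dsdense.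
have /choice[S DsS] : forall n, exists Sn : nat -> nat -> cantor_cube L,
    forall m, (forall j, Ds n (Sn m j)) /\ Sn m @ \oo --> E m.
  by move=> n; have [Sn ?] := choice (fun m => Dsdense n (E m)); exists Sn.
have /choice[J SJ] : forall anm : L * nat * nat, exists N,
    forall j, (N <= j)%N -> S anm.1.2 anm.2 j anm.1.1 = E anm.2 anm.1.1.
  move=> [[a n] m]; have [N _ SE] := (cvg_cantor_cubeP _ _).1 (DsS n m).2 a.
  by exists N => j /SE.
(* Bounding J by g makes the diagonal S (i + m i) (m i) (g (i + m i)) agree
   with E (m i) at each coordinate eventually. *)
have [g gJ] := bL (fun a n => \max_(m < n.+1) J (a, n, val m)).
exists (fun n => [set S n m (g n) | m in `I_n.+1]); split.
  move=> n; split; first exact/finite_image/finite_II.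
  by move=> _ [m _ <-]; exact: (DsS n m).1.
move=> z; have [m Emz] := Edense z.
have mi_lt i : (m i < (i + m i).+1)%N by rewrite ltnS leq_addl.
exists (fun i => S (i + m i) (m i) (g (i + m i))); split.
  by move=> i; exists (i + m i) => //; exists (m i) => //=; exact: mi_lt.
apply/cvg_cantor_cubeP => a.
have [N1 _ Ez] := (cvg_cantor_cubeP _ _).1 Emz a.
have [N2 gJa] := gJ a.
exists (maxn N1 N2) => // i /=; rewrite geq_max => /andP[N1i N2i].
rewrite (SJ (a, i + m i, m i)); first exact: Ez.
apply: leq_trans (gJa _ (leq_trans N2i (leq_addr _ _))).
exact: (@leq_bigmax _ (fun k : 'I_(i + m i).+1 => J (a, i + m i, val k))
  (Ordinal (mi_lt i))).
Qed.

Lemma finite_set_nat_ub (A : set nat) :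
  finite_set A -> exists b, forall k, A k -> (k <= b)%N.
Proof.
move=> /finite_seqP[l ->]; exists (\max_(k <- l) k) => k kl.
exact: (@leq_bigmax_seq _ _ predT id k kl).
Qed.

Lemma lt_bnum_nondecreasing (K : Type) :
  (forall F : K -> nat -> nat, (forall a, nondecreasing_seq (F a)) ->
    exists g, forall a, le_star (F a) g) -> lt_bnum K.
Proof.
move=> bK F; pose G a n := \max_(j < n.+1) F a j.
have [g Gg] : exists g, forall a, le_star (G a) g.
  apply: bK => a m n mn; apply/bigmax_leqP => j _.
  have jn : (j < n.+1)%N by rewrite ltnS (leq_trans _ mn) // -ltnS.
  exact: (@leq_bigmax _ (fun j : 'I_n.+1 => F a j) (Ordinal jn)).
exists g => a; have [N GN] := Gg a; exists N => n /GN; apply: leq_trans.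
exact: (@leq_bigmax _ (fun j : 'I_n.+1 => F a j) ord_max).
Qed.

Lemma le_star_bound_along (K : Type) (F : K -> nat -> nat) (b ni : nat -> nat) :
  (forall a, nondecreasing_seq (F a)) -> (forall n, exists i, (n <= ni i)%N) ->
  (forall a, \forall i \near \oo, (F a (ni i) <= b (ni i))%N) ->
  exists g, forall a, le_star (F a) g.
Proof.
move=> Fmono /choice[j nj] Fb.
exists (fun n => b (ni (j n))) => a; have [N _ FbN] := Fb a.
exists (\max_(i < N) ni i).+1 => n nN.
have Nj : (N <= j n)%N.
  rewrite leqNgt; apply/negP => jN.
  have := leq_trans (nj n) (@leq_bigmax _ (fun i : 'I_N => ni i) (Ordinal jN)).
  by rewrite leqNgt nN.
exact: leq_trans (Fmono a _ _ (nj n)) (FbN _ Nj).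
Qed.

Lemma sel_seq_separable_le_star_bound (K : Type) (F : K -> nat -> nat) :
  sel_seq_separable (cantor_cube K) -> (forall a, nondecreasing_seq (F a)) ->
  (forall n k, exists a, (k < F a n)%N) -> exists g, forall a, le_star (F a) g.
Proof.
move=> sssK Fmono Funb.
(* As column n of F is unbounded, no point of Ds n is the constant [ones], so
   points of the selection converging to [ones] come from unboundedly many n. *)
pose e n k (c : cantor_cube K) : cantor_cube K := fun a => (F a n <= k)%N && c a.
pose Ds n := [set p | exists k c, p = e n k c].
have Dsdense n : seq_dense (Ds n).
  move=> z; exists (fun k => e n k z); split; first by move=> k; exists k, z.
  by apply/cvg_cantor_cubeP => a; exists (F a n) => // k /= nk; rewrite /e nk.
have [Fs [FsD Fsdense]] := sssK Ds Dsdense.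
have /choice[b bFs] : forall n, exists b, forall p a, Fs n p -> p a -> (F a n <= b)%N.
  move=> n; have /choice[k kP] : forall p, exists k,
      Fs n p -> forall a, p a -> (F a n <= k)%N.
      move=> p; have [/(FsD n).2 [k [c ->]]|nFp] := pselect (Fs n p).
      by exists k => _ a /andP[].
    by exists 0 => /nFp.
  have [bk kb] := finite_set_nat_ub (@finite_image _ _ _ k (FsD n).1).
  by exists bk => p a Fp pa; apply: leq_trans (kP p Fp a pa) (kb _ _); exists p.
pose ones : cantor_cube K := fun=> true.
have [s [sFs s1]] := Fsdense ones.
have /choice[ni sni] : forall i, exists n, Fs n (s i).
  by move=> i; have [n _ ?] := sFs i; exists n.
apply: (le_star_bound_along (b := b) (ni := ni) Fmono).
  move=> n; apply: contrapT => /forallNP nin.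
  have closedFs : closed (\bigcup_(m in `I_n) Fs m).
    apply: cantor_cube_finite_closed; apply: bigcup_finite => [|m _].
      exact: finite_II.
    exact: (FsD m).1.
  have : (\bigcup_(m in `I_n) Fs m) ones.
    apply: (closed_cvg _ closedFs _ _ s1); apply: nearW => i.
    by exists (ni i) => //; rewrite /= ltnNge; exact/negP/nin.
  move=> [m _ /(FsD m).2 [k [c ekc]]]; have [a ka] := Funb m k.
  by move: (congr1 (fun p => p a) ekc); rewrite /e /ones leqNgt ka.
move=> a; have [N _ sN] := (cvg_cantor_cubeP _ _).1 s1 a.
by exists N => // i /sN si; exact: bFs (sni i) si.
Qed.

Lemma sel_seq_separable_lt_bnum (K : Type) :
  sel_seq_separable (cantor_cube K) -> lt_bnum K.
Proof.
move=> sssK; apply: lt_bnum_nondecreasing => F Fmono.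
have [[v unb]|bdd] := pselect (exists v, forall k, exists a, (k < F a v)%N).
  have [g Fg] : exists g, forall a, le_star (fun n => F a (n + v)) g.
    apply: sel_seq_separable_le_star_bound sssK _ _ => [a m n mn|n k].
      by apply: Fmono; rewrite leq_add2r.
    by have [a ka] := unb k; exists a; apply: leq_trans ka (Fmono _ _ _ (leq_addl n v)).
  exists g => a; have [N FgN] := Fg a.
  by exists N => n /FgN; apply: leq_trans (Fmono _ _ _ (leq_addr v n)).
have /choice[b Fb] : forall n, exists b, forall a, (F a n <= b)%N.
  move=> n; move/forallNP: bdd => /(_ n) /existsNP[b /forallNP Fb].
  by exists b => a; rewrite leqNgt; apply/negP/Fb.
by exists b => a; exists 0.
Qed.

Section ternary_encoding.
Variable RR : realType.
Local Open Scope ring_scope.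

Definition tern (n : nat) : RR := 3^-1 ^+ n.

Lemma tern_gt0 n : 0 < tern n.
Proof. by rewrite exprn_gt0 // invr_gt0. Qed.

Lemma ternS n : tern n.+1 = tern n / 3.
Proof. by rewrite /tern exprSr. Qed.

Lemma tern_le k d : tern (k + d) <= tern k.
Proof.
elim: d => [|d IH]; first by rewrite addn0.
by rewrite addnS ternS; have := tern_gt0 (k + d); lra.
Qed.

Fixpoint tern_psum (y : nat -> bool) (n : nat) : RR :=
  if n is n'.+1 then tern_psum y n' + (if y n' then tern n' else 0) else 0.

Lemma tern_psum_le y a d : tern_psum y a <= tern_psum y (a + d).
Proof.
elim: d => [|d IH]; first by rewrite addn0.
by rewrite addnS /=; have := tern_gt0 (a + d); case: (y (a + d)); lra.
Qed.

Lemma tern_psum_tail y a d :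
  tern_psum y (a + d) <= tern_psum y a + 3 / 2 * (tern a - tern (a + d)).
Proof.
elim: d => [|d IH]; first by rewrite addn0; lra.
by rewrite addnS /= ternS; have := tern_gt0 (a + d); case: (y (a + d)); lra.
Qed.

Lemma tern_psum_prefix y y' k :
  (forall j, (j < k)%N -> y j = y' j) -> tern_psum y k = tern_psum y' k.
Proof.
elim: k => [|k IH] //= yy'.
by rewrite IH => [|j jk]; [rewrite yy'|apply: yy'; exact: ltnW].
Qed.

(* The tail of the ternary expansion after digit k is at most half of 3^-k:
   this gives the gap in [enc_first_diff]. *)
Definition enc (y : nat -> bool) : RR := sup (range (tern_psum y)).

Lemma tern_psum_le_enc y n : tern_psum y n <= enc y.
Proof.
apply: sup_upper_bound; last by exists n.
split; first by exists 0, 0%N.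
exists (3 / 2) => _ [m _ <-]; have := tern_psum_tail y 0 m.
by rewrite add0n /= /tern expr0; have := tern_gt0 m; rewrite /tern; lra.
Qed.

Lemma enc_le y x : (forall n, tern_psum y n <= x) -> enc y <= x.
Proof. by move=> yx; apply: ge_sup; [exists 0, 0%N | move=> _ [n _ <-]]. Qed.

Lemma enc_first_diff (y y' : nat -> bool) (k : nat) : y k -> ~~ y' k ->
  (forall j, (j < k)%N -> y j = y' j) -> enc y' + tern k / 2 <= enc y.
Proof.
move=> yk /negbTE y'k yy'.
have y_lb : tern_psum y k.+1 <= enc y := tern_psum_le_enc y k.+1.
have y'_ub : enc y' <= tern_psum y' k + tern k / 2.
  apply: enc_le => n; have := tern_gt0 k; case: (leqP n k.+1) => nk.
    by have := tern_psum_le y' n (k.+1 - n); rewrite subnKC //= y'k; lra.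
  have := tern_psum_tail y' k.+1 (n - k.+1); rewrite subnKC; last exact: ltnW.
  by rewrite /= y'k ternS; have := tern_gt0 n; lra.
by move: y_lb; rewrite /= yk (tern_psum_prefix yy'); lra.
Qed.

Lemma enc_sep y y' m : y m != y' m -> tern m / 2 <= `|enc y - enc y'|.
Proof.
move=> yy'm.
have [k yy'k kmin] := ex_minnP (ex_intro (fun j => y j != y' j) m yy'm).
have km : (k <= m)%N := kmin m yy'm.
have tern_mk : tern m <= tern k by rewrite -(subnKC km); exact: tern_le.
have eq_below j : (j < k)%N -> y j = y' j.
  by move=> jk; apply/eqP; apply: contraTT jk; rewrite -leqNgt; exact: kmin.
have := tern_gt0 k; move: yy'k; case yk: (y k); case y'k: (y' k) => // _ tk.
  have := enc_first_diff (yk : y k) (negbT y'k) eq_below.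
  by move=> gap; rewrite ger0_norm; lra.
have := enc_first_diff (y'k : y' k) (negbT yk) (fun j jk => esym (eq_below j jk)).
by move=> gap; rewrite ler0_norm; lra.
Qed.

Lemma enc_ball_digit y y' t : ball (enc y) (tern t / 2) (enc y') -> y t = y' t.
Proof.
move=> yy'; apply/eqP; apply: contraTT yy' => /enc_sep yy'.
by rewrite /ball /= -leNgt.
Qed.

Lemma enc_inj : injective enc.
Proof.
move=> y y' yy'; apply/funext => t; apply: enc_ball_digit; rewrite yy'.
by apply: ballxx; rewrite divr_gt0 // tern_gt0.
Qed.

End ternary_encoding.

Lemma seq_separable_lt_qnum (K : Type) : seq_separable (cantor_cube K) -> lt_qnum K.
Proof.
move=> [E Edense]; pose digits (a : K) (t : nat) := E t a.
have digits_inj : injective digits.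
  move=> a b ab; apply: contrapT => nab.
  have [m /cvg_cantor_cubeP mz] := Edense (fun c => `[< c = a >]).
  have [N _ /(_ N (leqnn N))[Ea Eb]] := filterI (mz a) (mz b).
  move: (congr1 (fun y => y (m N)) ab); rewrite /digits /=.
  by rewrite -/((E \o m) N a) -/((E \o m) N b) Ea Eb asboolT // asboolF // => /esym.
exists (enc R \o digits); split; first by move=> a b /enc_inj /digits_inj.
move=> B Bf; pose z a : bool := `[< B (enc R (digits a)) >].
have [m /cvg_cantor_cubeP mz] := Edense z.
pose S t := \bigcup_(y in [set y : nat -> bool | y t]) ball (enc R y) (tern R t / 2).
exists (fun N => \bigcup_(i in [set i | (N <= i)%N]) S (m i)); split.
  by move=> N; do 2 apply: bigcup_open => ? _; exact: (@ball_open _ R^o).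
apply/seteqP; split=> [x Bx | _ [[a _ <-] Sa]].
  have [a _ ax] := Bf x Bx; subst x; split; first by exists a.
  move=> N _; have [N0 _ Ea] := mz a.
  exists (maxn N N0) => /=; first exact: leq_maxl.
  exists (digits a); last by apply: (@ballxx _ R^o); rewrite divr_gt0 // tern_gt0.
  by rewrite /digits /= -/((E \o m) _ a) (Ea _ (leq_maxr _ _)); exact/asboolP.
have [N0 _ Ea] := mz a; have [i /= N0i [y yi /enc_ball_digit yai]] := Sa N0 I.
by move: (Ea i N0i); rewrite /= -[E _ a]/(digits a _) -yai yi => /esym/asboolP.
Qed.

Theorem theorem5p2 :
  forall K : Type,
    (forall L : Type, card_leq L K -> sel_seq_separable (cantor_cube L)) <->
    (lt_bnum K /\ lt_qnum K).
Proof.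
move=> K; split=> [sss_below | [bK qK] L LK].
  have sssK : sel_seq_separable (cantor_cube K) by apply: sss_below; exists id.
  split; first exact: sel_seq_separable_lt_bnum.
  apply: seq_separable_lt_qnum.
  exact: (@sel_seq_separable_seq_separable (cantor_cube K) (fun=> false)).
have bL := lt_bnum_card_leq LK bK.
exact/(lt_bnum_sel_seq_separable bL)/lt_bnum_lt_qnum_seq_separable/(lt_qnum_card_leq LK).
Qed.
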